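(* Consider the two-station pricing game described in the context, and assume that for each $i\in\{1,2\}$ (with $j\ne i$): $\mathcal{B}_i$ is monotonically increasing (non-decreasing) on $[p_{\min},p_{\max}]$; $p_j\mapsto\mathcal{B}_i(p_j)-p_j$ is strictly decreasing on $[p_{\min},p_{\max}]$; and $\mathcal{B}_i(\mathcal{B}_j(p_{\min}))\ge p_{\min}$, $\mathcal{B}_i(\mathcal{B}_j(p_{\max}))\le p_{\max}$. Let $(p_1^*,p_2^* )$ be the (unique) pure-strategy pricing equilibrium, and for $i\ne j$ let $\Theta_i(p_i)=\mathcal{B}_i(\mathcal{B}_j(p_i))-p_i$. Then for every $p_i\in[p_{\min},p_{\max}]$: $\Theta_i(p_i)<0$ if $p_i>p_i^*$, and $\Theta_i(p_i)>0$ if $p_i<p_i^*$.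
   Context: Two charging stations $i\in\{1,2\}$ simultaneously choose prices $p_i\in[p_{\min},p_{\max}]$. Station $i$'s payoff is $Q_i(p_i,p_j)=(p_i-c_i)D_i(p_i,p_j)-\check c_i$ ($j\ne i$), where $c_i\le p_{\min}$ is its unit electricity cost, $\check c_i$ a fixed cost, and $D_i(p_i,p_j)$ the demand it receives from the PEVs' station-selection equilibrium under prices $(p_i,p_j)$. A best-response function of station $i$ is a function $\mathcal{B}_i:[p_{\min},p_{\max}]\to[p_{\min},p_{\max}]$ with $\mathcal{B}_i(p_j)\in\arg\max_{p_i\in[p_{\min},p_{\max}]}Q_i(p_i,p_j)$. A pure-strategy pricing equilibrium is a pair $(p_1^*,p_2^* )$ with $p_1^*=\mathcal{B}_1(p_2^* )$ and $p_2^*=\mathcal{B}_2(p_1^* )$. *)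

From Stdlib Require Import Reals.
Open Scope R_scope.

Definition in_prices (pmin pmax p : R) : Prop := pmin <= p <= pmax.

Definition payoff (c chk : R) (D : R -> R -> R) (pi pj : R) : R :=
  (pi - c) * D pi pj - chk.

Definition is_best_response (pmin pmax : R) (Q : R -> R -> R) (B : R -> R) : Prop :=
  forall pj, in_prices pmin pmax pj ->
    in_prices pmin pmax (B pj) /\
    (forall pi, in_prices pmin pmax pi -> Q pi pj <= Q (B pj) pj).

Definition nondecr_on (pmin pmax : R) (f : R -> R) : Prop :=
  forall x y, in_prices pmin pmax x -> in_prices pmin pmax y -> x <= y -> f x <= f y.

Definition strict_decr_on (pmin pmax : R) (f : R -> R) : Prop :=
  forall x y, in_prices pmin pmax x -> in_prices pmin pmax y -> x < y -> f y < f x.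

Definition is_equilibrium (pmin pmax : R) (B1 B2 : R -> R) (p1 p2 : R) : Prop :=
  in_prices pmin pmax p1 /\ in_prices pmin pmax p2 /\ p1 = B1 p2 /\ p2 = B2 p1.

Definition Theta (Bi Bj : R -> R) (p : R) : R := Bi (Bj p) - p.

(** At the equilibrium, [Theta_i] vanishes, since [B_j p_i* = p_j*] and [B_i p_j* = p_i*].
    Write [Theta_i p = (B_i (B_j p) - B_j p) + (B_j p - p)].  If [p > p_i*], monotonicity of
    [B_j] gives [B_j p >= p_j*], so the first summand is at most [p_i* - p_j*] because
    [B_i - id] is decreasing, while the second is strictly below [p_j* - p_i*] because
    [B_j - id] is strictly decreasing; hence [Theta_i p < 0].  The case [p < p_i*] is
    symmetric. *)

From Stdlib Require Import Reals Lra.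
Open Scope R_scope.

Lemma strict_decr_on_le (pmin pmax : R) (f : R -> R) (x y : R) :
  strict_decr_on pmin pmax f ->
  in_prices pmin pmax x -> in_prices pmin pmax y -> x <= y -> f y <= f x.
Proof.
  intros Hf Hx Hy Hxy.
  destruct (Rle_lt_or_eq_dec _ _ Hxy) as [Hlt | <-].
  - exact (Rlt_le _ _ (Hf x y Hx Hy Hlt)).
  - apply Rle_refl.
Qed.

Lemma Theta_sign_around_fixed_point (pmin pmax : R) (Bi Bj : R -> R) (pis pjs : R) :
  (forall p, in_prices pmin pmax p -> in_prices pmin pmax (Bj p)) ->
  nondecr_on pmin pmax Bj ->
  strict_decr_on pmin pmax (fun p => Bi p - p) ->
  strict_decr_on pmin pmax (fun p => Bj p - p) ->
  in_prices pmin pmax pis -> in_prices pmin pmax pjs ->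
  pis = Bi pjs -> pjs = Bj pis ->
  forall p, in_prices pmin pmax p ->
    (p > pis -> Theta Bi Bj p < 0) /\ (p < pis -> Theta Bi Bj p > 0).
Proof.
  intros HBj Hmon Hdi Hdj Hpi Hpj Ei Ej p Hp.
  pose proof (HBj p Hp) as HBjp.
  unfold Theta; split; intro Hlt.
  - assert (Hinner : Bj p - p < pjs - pis) by (rewrite Ej; exact (Hdj pis p Hpi Hp Hlt)).
    assert (Hpjs_le : pjs <= Bj p) by (rewrite Ej; exact (Hmon pis p Hpi Hp (Rlt_le _ _ Hlt))).
    pose proof (strict_decr_on_le _ _ _ _ _ Hdi Hpj HBjp Hpjs_le) as Houter.
    cbv beta in Houter; lra.
  - assert (Hinner : pjs - pis < Bj p - p) by (rewrite Ej; exact (Hdj p pis Hp Hpi Hlt)).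
    assert (HBjp_le : Bj p <= pjs) by (rewrite Ej; exact (Hmon p pis Hp Hpi (Rlt_le _ _ Hlt))).
    pose proof (strict_decr_on_le _ _ _ _ _ Hdi HBjp Hpj HBjp_le) as Houter.
    cbv beta in Houter; lra.
Qed.

Theorem proposition1
  (pmin pmax c1 c2 chk1 chk2 : R) (D1 D2 : R -> R -> R) (B1 B2 : R -> R)
  (p1s p2s : R)
  (Hc1 : c1 <= pmin) (Hc2 : c2 <= pmin)
  (HB1 : is_best_response pmin pmax (payoff c1 chk1 D1) B1)
  (HB2 : is_best_response pmin pmax (payoff c2 chk2 D2) B2)
  (Hmon1 : nondecr_on pmin pmax B1) (Hmon2 : nondecr_on pmin pmax B2)
  (Hdec1 : strict_decr_on pmin pmax (fun p => B1 p - p))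
  (Hdec2 : strict_decr_on pmin pmax (fun p => B2 p - p))
  (Hlo1 : B1 (B2 pmin) >= pmin) (Hhi1 : B1 (B2 pmax) <= pmax)
  (Hlo2 : B2 (B1 pmin) >= pmin) (Hhi2 : B2 (B1 pmax) <= pmax)
  (Heq : is_equilibrium pmin pmax B1 B2 p1s p2s) :
  (forall p, in_prices pmin pmax p ->
     (p > p1s -> Theta B1 B2 p < 0) /\ (p < p1s -> Theta B1 B2 p > 0)) /\
  (forall p, in_prices pmin pmax p ->
     (p > p2s -> Theta B2 B1 p < 0) /\ (p < p2s -> Theta B2 B1 p > 0)).
Proof.
  (* The cost and boundary hypotheses only serve to guarantee that an equilibrium exists;
     here it is given. *)
  destruct Heq as [Hp1 [Hp2 [E1 E2]]].
  split.
  - apply (Theta_sign_around_fixed_point pmin pmax B1 B2 p1s p2s); auto.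
    intros p Hp; exact (proj1 (HB2 p Hp)).
  - apply (Theta_sign_around_fixed_point pmin pmax B2 B1 p2s p1s); auto.
    intros p Hp; exact (proj1 (HB1 p Hp)).
Qed.
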